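(* There is an absolute constant $c>0$ such that the following holds. Let $\delta>0$, let $q$ and $N$ be positive integers, and let $T$ be an $N$-vertex tournament that is $\delta$-far from transitive. Then any coloring of the edges of $T$ with $q$ colors contains a directed path with at least $c\delta^2N/q^3$ vertices whose edges receive at most three colors. Furthermore, there are distinct vertices $v_1,\dots,v_L$ with $L\geq c\delta^2N/q^3$ such that $v_j\to v_{j+1}$ for all $1\leq j<L$, $v_{j+2}\to v_j$ for all $1\leq j\leq L-2$, and the colors of the edges $v_jv_{j+1}$ and of the edges $v_jv_{j+2}$ are periodic in $j$ with period $3$ (i.e. the color of $v_jv_{j+1}$ equals that of $v_{j+3}v_{j+4}$ and the color of $v_jv_{j+2}$ equals that of $v_{j+3}v_{j+5}$ whenever these edges exist).
   Context: A tournament is an orientation of a complete graph. An $N$-vertex tournament is $\delta$-close to transitive if it can be made transitive (acyclic) by reversing the orientation of at most $\delta N^2$ edges, and $\delta$-far from transitive otherwise. A directed path is a sequence of distinct vertices $v_1,\dots,v_L$ with $v_j\to v_{j+1}$ for all $j<L$. *)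

From HB Require Import structures.
From mathcomp Require Import all_boot all_order all_algebra.
From mathcomp Require Import reals.
Set Implicit Arguments. Unset Strict Implicit. Unset Printing Implicit Defensive.
Import Order.TTheory GRing.Theory Num.Theory.

Definition tournament (N : nat) (T : rel 'I_N) : Prop :=
  (forall x, ~~ T x x) /\
  (forall x y, x != y -> (T x y && ~~ T y x) || (T y x && ~~ T x y)).

Definition transitive_tournament (N : nat) (T : rel 'I_N) : Prop :=
  tournament T /\ (forall x y z, T x y -> T y z -> T x z).

(* T can be made transitive by reversing the orientation of at most k edges:
   there is a transitive tournament T' obtained from T by reversing some set
   of arcs, whose number (the arcs x -> y of T reversed in T') is at most k. *)
Definition close_to_transitive (R : realType) (N : nat) (T : rel 'I_N) (delta : R)
  : Prop :=
  exists T' : rel 'I_N, transitive_tournament T' /\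
    (#|[set p : 'I_N * 'I_N | T p.1 p.2 && ~~ T' p.1 p.2]|%:R
       <= delta * (N%:R ^+ 2))%R.

Definition far_from_transitive (R : realType) (N : nat) (T : rel 'I_N) (delta : R)
  : Prop := ~ close_to_transitive T delta.

Definition dipath (N : nat) (T : rel 'I_N) (v : nat -> 'I_N) (L : nat) : Prop :=
  (forall i j, i < L -> j < L -> v i = v j -> i = j) /\
  (forall j, j.+1 < L -> T (v j) (v j.+1)).

From HB Require Import structures.
From mathcomp Require Import all_boot all_order all_algebra.
From mathcomp Require Import reals.
From mathcomp Require Import zify ring lra.
Import Order.TTheory GRing.Theory Num.Theory.
Set Implicit Arguments. Unset Strict Implicit. Unset Printing Implicit Defensive.

(* Order the vertices by decreasing out-degree.  As T is delta-far from
   transitive, more than delta N^2 arcs point backwards in this order.  If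
   x -> y is backward then y has at least as many out-neighbours as x, which
   forces many z with y -> z -> x; summing over x and applying Cauchy-Schwarz
   yields B^2 / (2N) cyclic triangles, B the number of backward arcs.  A 1/q^3
   fraction F of them carries a single colour pattern.  Repeatedly deleting the
   triangles through a pair (with a phase) that extends in fewer than
   k = |F| / (3N^2) ways leaves a nonempty family in which every extendable
   pair extends in at least k ways.  There a greedy walk v_0, v_1, ..., whose
   window (v_j, v_(j+1), v_(j+2)) is a triangle of the family read in phase j,
   reaches length max(3, k) >= delta^2 N / (12 q^3); it is a directed path with
   v_(j+2) -> v_j whose colours have period 3. *)

Lemma card_pairs (I J : finType) (P : I -> J -> bool) :
  #|[set p : I * J | P p.1 p.2]| = (\sum_i #|[set j | P i j]|)%N.
Proof.
rewrite -sum1dep_card -(pair_big_dep xpredT P (fun _ _ => 1%N)) /=.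
by apply: eq_bigr => i _; rewrite sum1dep_card.
Qed.

Lemma sqr_sum_le (I : finType) (f : I -> nat) :
  ((\sum_i f i) ^ 2 <= #|I| * \sum_i f i ^ 2)%N.
Proof.
have amgm a b : (2 * (a * b) <= a ^ 2 + b ^ 2)%N by case: (nat_Cauchy a b).
rewrite -(leq_pmul2l (isT : 0 < 2)%N) expnS expn1 big_distrlr /= big_distrr /=.
apply: (@leq_trans (\sum_i \sum_j (f i ^ 2 + f j ^ 2))%N).
  by apply: leq_sum => i _; rewrite big_distrr; apply: leq_sum => j _; apply: amgm.
rewrite (eq_bigr (fun i => #|I| * f i ^ 2 + \sum_j f j ^ 2)%N); last first.
  by move=> i _; rewrite big_split /= sum_nat_const.
by rewrite big_split /= sum_nat_const -big_distrr /= mul2n -addnn.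
Qed.

Lemma pigeonhole (I K : finType) (A : {set I}) (f : I -> K) : (0 < #|K|)%N ->
  exists k, (#|A| <= #|K| * #|[set x in A | f x == k]|)%N.
Proof.
move=> K_gt0.
have [k max_k] := bigop.eq_bigmax (fun k => #|[set x in A | f x == k]|) K_gt0.
exists k; rewrite -max_k -sum1_card (partition_big f xpredT) //= -sum_nat_const.
apply: leq_sum => k' _; rewrite sum1dep_card.
exact: (bigop.leq_bigmax (F := fun k => #|[set x in A | f x == k]|)).
Qed.

Section PhasedTriples.

Variable T : finType.
Implicit Types (F G : {set T * T * T}) (a b c d : T) (s : seq T).

(* [rot t a b c] is the triple having a, b, c at positions t, t + 1, t + 2
   (mod 3); a triangle met at step t of a walk is read in this phase. *)
Definition rot (t : nat) a b c : T * T * T :=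
  if t %% 3 == 0 then (a, b, c) else if t %% 3 == 1 then (c, a, b) else (b, c, a).

Lemma rotS t a b c : rot t.+1 b c a = rot t a b c.
Proof.
rewrite /rot -addn1 -modnDml.
by case: (t %% 3) (ltn_mod t 3) => [|[|[|]]].
Qed.

Lemma rot_mod t a b c : rot (t %% 3) a b c = rot t a b c.
Proof. by rewrite /rot modn_mod. Qed.

Definition ext F t b c := [set d | rot t b c d \in F].

Definition extendable F :=
  [set u : 'I_3 * T * T | (0 < #|ext F u.1.1 u.1.2 u.2|)%N].

Definition rich k F :=
  forall (t : 'I_3) b c, (0 < #|ext F t b c|)%N -> (k <= #|ext F t b c|)%N.

Lemma ext_mod F t b c : ext F (t %% 3) b c = ext F t b c.
Proof. by apply/setP => d; rewrite !inE rot_mod. Qed.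

Lemma extS F G t b c : F \subset G -> ext F t b c \subset ext G t b c.
Proof. by move=> /subsetP FG; apply/subsetP => d; rewrite !inE => /FG. Qed.

Lemma rich_ext_next k F t a b c :
  rich k F -> rot t a b c \in F -> (k <= #|ext F t.+1 b c|)%N.
Proof.
move=> richF Fabc; rewrite -ext_mod.
apply: (richF (Ordinal (ltn_pmod t.+1 (isT : 0 < 3)))) => /=.
by apply/card_gt0P; exists a; rewrite ext_mod inE rotS.
Qed.

Definition prune F t b c := F :\: [set rot t b c d | d in ext F t b c].

Lemma prune_subset F t b c : prune F t b c \subset F.
Proof. exact: subsetDl. Qed.

Lemma rot_inj t b c : injective (rot t b c).
Proof. by move=> d d'; rewrite /rot; do 2?case: ifP => _; case. Qed.

Lemma card_prune F t b c : (#|prune F t b c| + #|ext F t b c|)%N = #|F|.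
Proof.
rewrite /prune cardsD; set E := [set _ | _ in _].
have EF : E \subset F by apply/subsetP => x /imsetP [d]; rewrite inE => ? ->.
by rewrite (setIidPr EF) -(card_imset _ (@rot_inj t b c)) subnK ?subset_leq_card.
Qed.

Lemma extendable_prune F (t : 'I_3) b c :
  extendable (prune F t b c) \subset extendable F :\ (t, b, c).
Proof.
apply/subsetP => -[[t' b'] c']; rewrite !inE /= => ext'_gt0; apply/andP; split.
  apply: contraTneq ext'_gt0 => -[-> -> ->]; rewrite -eqn0Ngt cards_eq0.
  apply/eqP/setP => d; rewrite !inE; apply/negP => /andP [/negP nE Fd].
  by apply: nE; apply/imsetP; exists d; rewrite ?inE.
exact: leq_trans ext'_gt0 (subset_leq_card (extS _ _ _ (prune_subset _ _ _ _))).
Qed.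

Lemma exists_rich_subset k F : (k.-1 * #|extendable F| < #|F|)%N ->
  exists2 F' : {set T * T * T}, F' \subset F & (0 < #|F'|)%N /\ rich k F'.
Proof.
elim: {F}_.+1 {-2}F (ltnSn #|F|) => // n IHn F leFn small.
(* Pruning a pair with fewer than k extensions removes at most k - 1 triples
   and at least one extendable pair, so the hypothesis is preserved. *)
case: (pickP [pred u : 'I_3 * T * T | 0 < #|ext F u.1.1 u.1.2 u.2| < k]) => [
    [[t b c]] /= /andP [ext_gt0 ext_ltk] | rich_F]; last first.
  exists F => //; split; first by move: small; case: #|F|.
  by move=> t b c ext_gt0; have := rich_F (t, b, c); rewrite /= ext_gt0 ltnNge => /negbFE.
have cardF := card_prune F t b c.
set F' := prune F t b c in cardF *.
have ext_lt : (#|extendable F'| < #|extendable F|)%N.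
  apply: leq_ltn_trans (subset_leq_card (extendable_prune F t b c)) _.
  by rewrite [X in (_ < X)%N](cardsD1 (t, b, c)) inE ext_gt0.
have leF'n : (#|F'| < n)%N by move: leFn; lia.
have small' : (k.-1 * #|extendable F'| < #|F'|)%N.
  have : (k.-1 * #|extendable F'|.+1 <= k.-1 * #|extendable F|)%N.
    by rewrite leq_mul2l ext_lt orbT.
  by rewrite mulnSr; move: small; lia.
have [F'' F''F' [F''_gt0 rich_F'']] := IHn F' leF'n small'.
by exists F''; [apply: subset_trans F''F' (prune_subset _ _ _ _) | ].
Qed.

Definition walk_in F x0 s := forall j, (j.+2 < size s)%N ->
  rot j (nth x0 s j) (nth x0 s j.+1) (nth x0 s j.+2) \in F.

Lemma walk_inS F G x0 s : F \subset G -> walk_in F x0 s -> walk_in G x0 s.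
Proof. by move=> /subsetP FG walk_s j /walk_s /FG. Qed.

Lemma rich_walk_rcons k F x0 s : rich k F -> uniq s -> walk_in F x0 s ->
  (3 <= size s < k)%N -> exists d, uniq (rcons s d) /\ walk_in F x0 (rcons s d).
Proof.
move=> richF uniq_s walk_s /andP [s_ge3 s_ltk]; set m := size s in s_ge3 s_ltk.
(* The last window of s makes its last two vertices extendable at the next
   phase, so they have at least k > size s extensions. *)
have ext_ge := rich_ext_next richF (walk_s (m - 3)%N ltac:(lia)).
have /subsetPn [d d_ext d_notin] :
    ~~ (ext F (m - 3).+1 (nth x0 s (m - 3).+1) (nth x0 s (m - 3).+2) \subset s).
  apply: contraL ext_ge => /subset_leq_card ext_le; rewrite -ltnNge.
  exact: leq_ltn_trans ext_le (leq_ltn_trans (card_size s) s_ltk).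
exists d; split; first by rewrite rcons_uniq d_notin.
move=> j; rewrite size_rcons ltnS !nth_rcons -/m => j_le.
have -> : (j < m)%N by lia.
have -> : (j.+1 < m)%N by lia.
rewrite leq_eqVlt in j_le; case/orP: j_le => [/eqP j_eq | j_lt].
  rewrite j_eq ltnn eqxx; have -> : j = (m - 3).+1 by lia.
  by rewrite inE in d_ext.
by rewrite j_lt; apply: walk_s.
Qed.

Lemma rich_long_walk k F x0 : rich k F -> (0 < #|F|)%N ->
  {in F, forall p, uniq [:: p.1.1; p.1.2; p.2]} ->
  exists s, [/\ size s = maxn 3 k, uniq s & walk_in F x0 s].
Proof.
move=> richF F_gt0 F_uniq.
suff walk m : (3 <= m <= maxn 3 k)%N ->
    exists s, [/\ size s = m, uniq s & walk_in F x0 s].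
  by apply: walk; rewrite leq_maxl leqnn.
elim: m => [//|m IHm] /andP [m_ge2 m_le].
have [m_eq2 | m_neq2] := eqVneq m 2.
  have /card_gt0P [[[a b] c] Fabc] := F_gt0.
  exists [:: a; b; c]; split; [by rewrite m_eq2 | exact: F_uniq Fabc |].
  by case.
have [s [size_s uniq_s walk_s]] := IHm ltac:(lia).
have [|d [uniq_sd walk_sd]] := rich_walk_rcons richF uniq_s walk_s.
  by rewrite size_s; lia.
by exists (rcons s d); rewrite size_rcons size_s.
Qed.

End PhasedTriples.

Section TournamentBasics.

Variables (N : nat) (T : rel 'I_N).
Hypothesis tourT : tournament T.

Lemma tournament_neq x y : T x y -> x != y.
Proof. by case: tourT => irr _ Txy; apply: contraTneq Txy => ->; apply: irr. Qed.

Lemma tournament_opp x y : x != y -> T y x = ~~ T x y.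
Proof. by case: tourT => _ tot /tot /orP [] /andP [-> /negPf ->]. Qed.

Lemma tournament_asym x y : T x y -> ~~ T y x.
Proof. by move=> Txy; rewrite tournament_opp ?Txy ?tournament_neq. Qed.

Lemma arcs_within_le (Y : {set 'I_N}) :
  (2 * \sum_(y in Y) #|[set z in Y | T y z]| <= #|Y| * #|Y|)%N.
Proof.
have card_out y : #|[set z in Y | T y z]| = (\sum_(z in Y) T y z)%N.
  by rewrite -sum1dep_card big_mkcondr /=; apply: eq_bigr => z _; case: (T y z).
rewrite (eq_bigr _ (fun y _ => card_out y)) mul2n -addnn {2}exchange_big /=.
rewrite -big_split /= -sum_nat_const; apply: leq_sum => y _.
rewrite -big_split /= -sum1_card; apply: leq_sum => z _.
by case Tyz: (T y z); rewrite ?(negPf (tournament_asym Tyz)) //; case: (T z y).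
Qed.

End TournamentBasics.

Section Tournament.

Variables (N : nat) (T : rel 'I_N).
Implicit Types (x y z : 'I_N) (Y : {set 'I_N}).

Definition outdeg x := #|[set y | T x y]|.

Definition outdeg_order : rel 'I_N :=
  fun x y => (outdeg y < outdeg x)%N || (outdeg y == outdeg x) && (x < y)%N.

Definition back_arcs := [set p : 'I_N * 'I_N | T p.1 p.2 && ~~ outdeg_order p.1 p.2].

Definition back_out x := [set y | T x y && outdeg_order y x].

Definition closers x y := [set z | T y z && T z x].

Definition cyclic_triangles :=
  [set p : 'I_N * 'I_N * 'I_N | [&& T p.1.1 p.1.2, T p.1.2 p.2 & T p.2 p.1.1]].

Lemma outdeg_order_transitive : transitive_tournament outdeg_order.
Proof.
rewrite /transitive_tournament /tournament /outdeg_order; split; first split.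
- by move=> x; rewrite !ltnn andbF.
- move=> x y /negPf xy; have {}xy : (x == y :> nat) = false by [].
  by case: ltngtP; case: ltngtP xy => //=; rewrite eq_sym => ->.
- move=> x y z; move: (outdeg x) (outdeg y) (outdeg z) => a b c.
  case/orP => [ba|/andP [/eqP-> xy]]; case/orP => [cb|/andP [/eqP-> yz]].
  + by rewrite (ltn_trans cb ba).
  + by rewrite ba.
  + by rewrite cb.
  + by rewrite eqxx (ltn_trans xy yz) orbT.
Qed.

Lemma far_back_arcs_gt (R : realType) (delta : R) :
  far_from_transitive T delta -> (delta * N%:R ^+ 2 < #|back_arcs|%:R)%R.
Proof.
move=> far; rewrite ltNge; apply/negP => close; apply: far.
by exists outdeg_order; split; [exact: outdeg_order_transitive | exact: close].
Qed.

Hypothesis tourT : tournament T.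

Lemma card_back_out_le x y : y \in back_out x ->
  (#|back_out x| <= #|closers x y| + #|[set z in back_out x | T y z]|)%N.
Proof.
set Y := back_out x; set O := [set z | T x z] => Yy.
have YO : Y \subset O by apply/subsetP => z; rewrite !inE => /andP [].
have [Txy ord_yx] : T x y /\ outdeg_order y x by move: Yy; rewrite inE => /andP.
have out_le : (#|O| <= outdeg y)%N.
  by case/orP: ord_yx => [/ltnW | /andP [/eqP <- _]].
(* An out-neighbour of y either closes x -> y into a cyclic triangle, or lies
   in Y, or is an out-neighbour of x outside Y. *)
have out_sub : [set z | T y z] \subset closers x y :|: [set z in Y | T y z] :|: O :\: Y.
  apply/subsetP => z; rewrite !inE => Tyz; rewrite Tyz /=.
  case Tzx: (T z x) => //=.
  have Txz : T x z.
    rewrite -[T x z]negbK -tournament_opp ?Tzx //.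
    by apply: contraTneq Tyz => <-; apply: tournament_asym.
  by rewrite Txz; case: outdeg_order.
have card_OY : #|O :\: Y| = (#|O| - #|Y|)%N by rewrite cardsD (setIidPr YO).
have := leq_trans out_le (subset_leq_card out_sub).
have := subset_leq_card YO.
have := cardsU (closers x y :|: [set z in Y | T y z]) (O :\: Y).
have := cardsU (closers x y) [set z in Y | T y z].
lia.
Qed.

Lemma back_out_sq_le x :
  (#|back_out x| ^ 2 <= 2 * \sum_(y in back_out x) #|closers x y|)%N.
Proof.
set Y := back_out x.
have : (#|Y| * #|Y| <= \sum_(y in Y) (#|closers x y| + #|[set z in Y | T y z]|))%N.
  by rewrite -sum_nat_const; apply: leq_sum => y; apply: card_back_out_le.
have := arcs_within_le tourT Y; rewrite big_split /= expnS expn1.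
set A := (\sum_(y in Y) _)%N; set C := (\sum_(y in Y) _)%N; set n := #|Y|; lia.
Qed.

Lemma card_back_arcs : #|back_arcs| = (\sum_x #|back_out x|)%N.
Proof.
rewrite (card_pairs (fun x y => T x y && ~~ outdeg_order x y)).
apply: eq_bigr => x _; apply: eq_card => y; rewrite !inE; case Txy: (T x y) => //=.
by rewrite -(tournament_opp (proj1 outdeg_order_transitive)) ?(tournament_neq tourT).
Qed.

Lemma sum_closers_le :
  (\sum_x \sum_(y in back_out x) #|closers x y| <= #|cyclic_triangles|)%N.
Proof.
rewrite /cyclic_triangles (card_pairs (fun p z => [&& T p.1 p.2, T p.2 z & T z p.1])).
rewrite -(pair_bigA _ (fun x y => #|[set z | [&& T x y, T y z & T z x]]|)).
apply: leq_sum => x _; rewrite big_mkcond; apply: leq_sum => y _.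
case: ifP => // /[!inE] /andP [Txy _]; apply: subset_leq_card.
by apply/subsetP => z; rewrite !inE Txy.
Qed.

Lemma back_arcs_sq_le : (#|back_arcs| ^ 2 <= 2 * N * #|cyclic_triangles|)%N.
Proof.
rewrite card_back_arcs; apply: leq_trans (sqr_sum_le _) _.
rewrite card_ord [(2 * N)%N]mulnC -mulnA leq_mul2l; apply/orP; right.
apply: leq_trans (leq_mul (leqnn 2) sum_closers_le); rewrite big_distrr /=.
by apply: leq_sum => x _; apply: back_out_sq_le.
Qed.

End Tournament.

Section ColouredWalk.

Variables (N q : nat) (T : rel 'I_N) (col : 'I_N -> 'I_N -> 'I_q).
Implicit Types (κ : 'I_q * 'I_q * 'I_q) (s : seq 'I_N).

Definition coloured_triangles κ := [set p in cyclic_triangles T |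
  (col p.1.1 p.1.2, col p.1.2 p.2, col p.2 p.1.1) == κ].

Lemma pigeonhole_colours : (0 < q)%N ->
  exists κ, (#|cyclic_triangles T| <= q ^ 3 * #|coloured_triangles κ|)%N.
Proof.
move=> q_gt0; have card_K : #|{: 'I_q * 'I_q * 'I_q}| = (q ^ 3)%N.
  by rewrite !card_prod card_ord expnS expnS expn1 mulnA.
have [|κ le] := pigeonhole (cyclic_triangles T)
  (fun p => (col p.1.1 p.1.2, col p.1.2 p.2, col p.2 p.1.1)).
  by rewrite card_K expn_gt0 q_gt0.
by exists κ; rewrite -card_K.
Qed.

Definition phase_col κ j :=
  if j %% 3 == 0 then κ.1.1 else if j %% 3 == 1 then κ.1.2 else κ.2.

Lemma phase_colD3 κ j : phase_col κ (j + 3) = phase_col κ j.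
Proof. by rewrite /phase_col modnDr. Qed.

Lemma phase_col_in κ j : phase_col κ j \in [set κ.1.1; κ.1.2; κ.2].
Proof. by rewrite /phase_col !inE; do 2?case: ifP => _; rewrite eqxx ?orbT. Qed.

Lemma coloured_rot_arcs κ j a b c : rot j a b c \in coloured_triangles κ ->
  [/\ T a b, T b c & T c a] /\
  [/\ col a b = phase_col κ j, col b c = phase_col κ j.+1
    & col c a = phase_col κ j.+2].
Proof.
rewrite /rot /phase_col -[j.+2]addn2 -[j.+1]addn1.
rewrite -[(j + 1) %% 3]modnDml -[(j + 2) %% 3]modnDml.
case: (j %% 3) (ltn_mod j 3) => [|[|[|//]]] _;
  by rewrite !inE /= => /andP [/and3P [-> -> ->] /eqP <-].
Qed.

Hypothesis tourT : tournament T.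
Variable x0 : 'I_N.

Lemma coloured_triangles_uniq κ :
  {in coloured_triangles κ, forall p, uniq [:: p.1.1; p.1.2; p.2]}.
Proof.
move=> [[a b] c]; rewrite !inE /= => /andP [/and3P [Tab Tbc Tca] _].
rewrite !inE negb_or (tournament_neq tourT Tab) (tournament_neq tourT Tbc).
by rewrite eq_sym (tournament_neq tourT Tca).
Qed.

Lemma long_coloured_walk κ : (0 < #|coloured_triangles κ|)%N ->
  exists s, [/\ (#|coloured_triangles κ| <= 6 * N ^ 2 * size s)%N, (3 <= size s)%N,
    uniq s & walk_in (coloured_triangles κ) x0 s].
Proof.
set F := coloured_triangles κ => F_gt0; set k := (#|F| %/ (3 * N ^ 2))%N.
have N_gt0 : (0 < N)%N := leq_ltn_trans (leq0n x0) (ltn_ord x0).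
have ext_le : (#|extendable F| <= 3 * N ^ 2)%N.
  by rewrite (leq_trans (max_card _)) // !card_prod !card_ord; lia.
have k_le : (k * (3 * N ^ 2) <= #|F|)%N by apply: leq_divM.
have [F' F'F [F'_gt0 rich_F']] : exists2 F' : {set 'I_N * 'I_N * 'I_N},
    F' \subset F & (0 < #|F'|)%N /\ rich k F'.
  apply: exists_rich_subset; move: ext_le k_le F_gt0; clearbody k.
  move: #|extendable F| (3 * N ^ 2)%N #|F| => e d f.
  by case: k => [|k] /=; rewrite ?mul0n // => /(leq_mul (leqnn k)); nia.
have F'_uniq := sub_in1 (subsetP F'F) (@coloured_triangles_uniq κ).
have [s [size_s uniq_s walk_s]] := rich_long_walk x0 rich_F' F'_gt0 F'_uniq.
exists s; split; [rewrite size_s | by rewrite size_s leq_maxl | by [] |].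
  have F_lt : (#|F| < k.+1 * (3 * N ^ 2))%N by apply: ltn_ceil; nia.
  by clearbody k; nia.
exact: walk_inS F'F walk_s.
Qed.

Lemma walk_coloured_path κ s : (3 <= size s)%N -> uniq s ->
  walk_in (coloured_triangles κ) x0 s ->
  [/\ dipath T (nth x0 s) (size s),
    forall j, (j.+2 < size s)%N -> T (nth x0 s j.+2) (nth x0 s j),
    forall j, (j.+1 < size s)%N -> col (nth x0 s j) (nth x0 s j.+1) = phase_col κ j
  & forall j, (j.+2 < size s)%N -> col (nth x0 s j.+2) (nth x0 s j) = phase_col κ j.+2].
Proof.
move=> s_ge3 uniq_s walk_s.
have window j jL := coloured_rot_arcs (walk_s j jL).
have arc j : (j.+1 < size s)%N ->
    T (nth x0 s j) (nth x0 s j.+1) /\ col (nth x0 s j) (nth x0 s j.+1) = phase_col κ j.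
  case: (ltnP j.+2 (size s)) => [/window [[? _ _] [? _ _]] // | jL jL'].
  have j_gt0 : (0 < j)%N by lia.
  by have := window j.-1; rewrite prednK // => /(_ jL') [[_ ? _] [_ ? _]].
split.
- split; last by move=> j /arc [].
  by move=> i j iL jL /eqP; rewrite nth_uniq // => /eqP.
- by move=> j /window [[]].
- by move=> j /arc [].
- by move=> j /window [_ []].
Qed.

Lemma periodic_coloured_path : (0 < q)%N -> (0 < #|back_arcs T|)%N ->
  exists κ (v : nat -> 'I_N) L,
  [/\ (#|back_arcs T| ^ 2 <= 12 * q ^ 3 * N ^ 3 * L)%N, dipath T v L,
    forall j, (j.+2 < L)%N -> T (v j.+2) (v j),
    forall j, (j.+1 < L)%N -> col (v j) (v j.+1) = phase_col κ j
  & forall j, (j.+2 < L)%N -> col (v j.+2) (v j) = phase_col κ j.+2].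
Proof.
move=> q_gt0 back_gt0; have [κ cyc_le] := pigeonhole_colours q_gt0.
have back_le := leq_trans (back_arcs_sq_le tourT) (leq_mul (leqnn _) cyc_le).
have F_gt0 : (0 < #|coloured_triangles κ|)%N.
  rewrite lt0n; apply: contraTneq back_le => ->.
  by rewrite !muln0 -ltnNge expn_gt0 back_gt0.
have [s [F_le s_ge3 uniq_s walk_s]] := long_coloured_walk F_gt0.
have [path back fwd_col back_col] := walk_coloured_path s_ge3 uniq_s walk_s.
exists κ, (nth x0 s), (size s); split => //.
apply: leq_trans back_le _; have := leq_mul (leqnn (2 * N * q ^ 3)) F_le.
by rewrite -!mulnA => /leq_trans; apply; rewrite eq_leq //; ring.
Qed.

End ColouredWalk.

Local Open Scope ring_scope.

Lemma lower_bound_from_sq (R : realFieldType) (d n q L B : R) :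
  0 < d -> 0 < n -> 0 < q -> d * n ^+ 2 < B -> B ^+ 2 <= 12 * q ^+ 3 * n ^+ 3 * L ->
  1 / 12 * d ^+ 2 * n / q ^+ 3 <= L.
Proof.
move=> d_gt0 n_gt0 q_gt0 dn_lt B_le.
have n3_gt0 : 0 < n ^+ 3 by rewrite exprn_gt0.
rewrite ler_pdivrMr ?exprn_gt0 // -(ler_pM2r n3_gt0).
have : 0 < d * n ^+ 2 by rewrite mulr_gt0 ?exprn_gt0.
nra.
Qed.

Unset Implicit Arguments.

Theorem theorem1p7 (R : realType) :
  exists c : R, 0 < c /\
  forall (delta : R) (q N : nat) (T : rel 'I_N) (col : 'I_N -> 'I_N -> 'I_q),
    0 < delta -> (0 < q)%N -> (0 < N)%N ->
    tournament T -> far_from_transitive T delta ->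
    (exists (v : nat -> 'I_N) (L : nat) (S : {set 'I_q}),
        c * delta ^+ 2 * N%:R / q%:R ^+ 3 <= L%:R /\
        dipath T v L /\ (#|S| <= 3)%N /\
        (forall j, (j.+1 < L)%N -> col (v j) (v j.+1) \in S)) /\
    (exists (v : nat -> 'I_N) (L : nat),
        c * delta ^+ 2 * N%:R / q%:R ^+ 3 <= L%:R /\
        dipath T v L /\
        (forall j, (j.+2 < L)%N -> T (v j.+2) (v j)) /\
        (forall j, (j + 4 < L)%N -> col (v j) (v j.+1) = col (v (j + 3)%N) (v (j + 4)%N)) /\
        (forall j, (j + 5 < L)%N -> col (v j.+2) (v j) = col (v (j + 5)%N) (v (j + 3)%N))).
Proof.
exists (1 / 12); split; first lra.
move=> delta q N T col delta_gt0 q_gt0 N_gt0 tourT far.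
have back_gt := far_back_arcs_gt far.
have back_gt0 : (0 < #|back_arcs T|)%N.
  by rewrite -(ltr0n R); apply: lt_trans back_gt; rewrite mulr_gt0 ?exprn_gt0 ?ltr0n.
have [κ [v [L [back_le path back fwd_col back_col]]]] :=
  periodic_coloured_path col tourT (Ordinal N_gt0) q_gt0 back_gt0.
have L_ge : 1 / 12 * delta ^+ 2 * N%:R / q%:R ^+ 3 <= L%:R.
  apply: lower_bound_from_sq delta_gt0 _ _ back_gt _; rewrite ?ltr0n //.
  by rewrite -!natrX -!natrM ler_nat.
split.
  exists v, L, [set κ.1.1; κ.1.2; κ.2]; do !split => //.
    apply: leq_trans (leq_card_setU _ _) _.
    by rewrite cards2 cards1; case: (_ != _).
  by move=> j /fwd_col ->; apply: phase_col_in.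
exists v, L; do !split => //.
  move=> j jL; have -> : (j + 4 = (j + 3).+1)%N by lia.
  by rewrite !fwd_col ?phase_colD3 //; lia.
move=> j jL; have -> : (j + 5 = (j + 3).+2)%N by lia.
by rewrite !back_col -?addSn ?phase_colD3 //; lia.
Qed.
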